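(* Let $n\ge 3$ and let $S=[A_0,\dots,A_n]$ be an $n$-pre-kite which is not a regular $n$-simplex. Then $S$ has at most two apexes.
   Context: An $n$-simplex is the convex hull of $n+1$ affinely independent points in a Euclidean space; its $j$-th facet $S_j$ is the $(n-1)$-simplex obtained by removing the vertex $A_j$. An $n$-simplex is an $n$-pre-kite if at least one facet $S_j$ is a regular $(n-1)$-simplex (all edges of equal length); the corresponding vertex $A_j$ is called an apex. *)

From HB Require Import structures.
From mathcomp Require Import all_boot all_order all_algebra.
Set Implicit Arguments. Unset Strict Implicit. Unset Printing Implicit Defensive.
Import Order.TTheory GRing.Theory Num.Theory.
Local Open Scope ring_scope.

Definition edist (R : rcfType) (m : nat) (x y : 'rV[R]_m) : R :=
  Num.sqrt (((x - y) *m (x - y)^T) 0 0).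

Definition affinely_independent (R : rcfType) (m n : nat)
  (A : 'I_n.+1 -> 'rV[R]_m) : bool :=
  row_free (\matrix_(i < n) (A (lift ord0 i) - A ord0)).

Definition regular_simplex (R : rcfType) (m n : nat)
  (A : 'I_n.+1 -> 'rV[R]_m) : Prop :=
  forall i j k l : 'I_n.+1, i != j -> k != l -> edist (A i) (A j) = edist (A k) (A l).

Definition is_apex (R : rcfType) (m n : nat)
  (A : 'I_n.+1 -> 'rV[R]_m) (j : 'I_n.+1) : bool :=
  [forall i1 : 'I_n.+1, forall i2 : 'I_n.+1, forall k1 : 'I_n.+1, forall k2 : 'I_n.+1,
    [&& i1 != j, i2 != j, k1 != j, k2 != j, i1 != i2 & k1 != k2] ==>
    (edist (A i1) (A i2) == edist (A k1) (A k2))].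

Definition pre_kite (R : rcfType) (m n : nat) (A : 'I_n.+1 -> 'rV[R]_m) : Prop :=
  affinely_independent A /\ exists j, is_apex A j.

Definition apexes (R : rcfType) (m n : nat) (A : 'I_n.+1 -> 'rV[R]_m) : {set 'I_n.+1} :=
  [set j | is_apex A j].

From HB Require Import structures.
From mathcomp Require Import all_boot all_order all_algebra.
Set Implicit Arguments.
Unset Strict Implicit.
Unset Printing Implicit Defensive.

Import Order.TTheory GRing.Theory Num.Theory.
Local Open Scope ring_scope.

(* Suppose a, b, c are three apexes and pick a fourth vertex e (possible since
   n >= 3).  The edge ce lies in the facets opposite a and b, and ae in those
   opposite b and c, so the three regular facets have a common edge length.
   Every edge misses one of a, b, c, hence lies in one of these facets, so the
   simplex is regular. *)

Section EdgeLengths.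

Variables (T : eqType) (V : Type) (d : T -> T -> V).

Definition equilateral : Prop :=
  forall x y u v, x != y -> u != v -> d x y = d u v.

Definition facet_regular (j : T) : Prop :=
  forall x y u v, x != j -> y != j -> u != j -> v != j -> x != y -> u != v ->
  d x y = d u v.

Lemma edge_avoids_one_of_three (x y : T) {a b c : T} :
  a != b -> b != c -> c != a ->
  exists2 j, j \in [:: a; b; c] & (x != j) && (y != j).
Proof.
move=> ab bc ca.
have ac : a != c by rewrite eq_sym.
have [-> | xa] := eqVneq x a.
  have [-> | yb] := eqVneq y b; last by exists b; rewrite ?inE ?eqxx ?orbT // ab.
  by exists c; rewrite ?inE ?eqxx ?orbT // ac bc.
have [-> | ya] := eqVneq y a; last by exists a; rewrite ?inE ?eqxx // xa.
have [-> | xb] := eqVneq x b; last by exists b; rewrite ?inE ?eqxx ?orbT // xb ab.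
by exists c; rewrite ?inE ?eqxx ?orbT // bc ac.
Qed.

Lemma equilateral_of_three_regular_facets (a b c e : T) :
  uniq [:: a; b; c; e] ->
  facet_regular a -> facet_regular b -> facet_regular c -> equilateral.
Proof.
rewrite /= !inE !negb_or -!andbA => /and5P[ab ac ae bc /and3P[be ce _]].
move=> Fa Fb Fc.
have ec : e != c by rewrite eq_sym.
have Ea x y : x != a -> y != a -> x != y -> d x y = d c e.
  by move=> xa ya xy; apply: Fa; rewrite // eq_sym.
have Eb x y : x != b -> y != b -> x != y -> d x y = d c e.
  by move=> xb yb xy; apply: Fb; rewrite // eq_sym.
have Ec x y : x != c -> y != c -> x != y -> d x y = d c e.
  move=> xc yc xy; rewrite (Fc x y a e) // ?(eq_sym a) //.
  by apply: Eb; rewrite // eq_sym.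
have E x y : x != y -> d x y = d c e.
  move=> xy; have ca : c != a by rewrite eq_sym.
  have [j] := edge_avoids_one_of_three x y ab bc ca.
  rewrite !inE => /or3P[] /eqP-> /andP[xj yj]; [exact: Ea | exact: Eb | exact: Ec].
by move=> x y u v xy uv; rewrite (E x y) // (E u v).
Qed.

End EdgeLengths.

Lemma exists_notin3 (T : finType) (a b c : T) :
  (3 < #|T|)%N -> exists e, e \notin [:: a; b; c].
Proof.
move=> T_gt3; apply/existsP; rewrite -negb_forall; apply/negP => /forallP inabc.
have : (#|T| <= 3)%N.
  apply: leq_trans (card_size [:: a; b; c]).
  by apply: subset_leq_card; apply/subsetP => x _; apply: inabc.
by rewrite leqNgt T_gt3.
Qed.

Lemma apex_facet_regular (R : rcfType) (m n : nat) (A : 'I_n.+1 -> 'rV[R]_m)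
    (j : 'I_n.+1) :
  is_apex A j -> facet_regular (fun x y => edist (A x) (A y)) j.
Proof.
move=> apex x y u v xj yj uj vj xy uv; apply/eqP.
move: apex => /forallP/(_ x)/forallP/(_ y)/forallP/(_ u)/forallP/(_ v)/implyP.
by apply; rewrite xj yj uj vj xy uv.
Qed.

Theorem lemma5p1 (R : rcfType) (m n : nat) (A : 'I_n.+1 -> 'rV[R]_m) :
  (3 <= n)%N -> pre_kite A -> ~ regular_simplex A ->
  (#|apexes A| <= 2)%N.
Proof.
move=> n_ge3 _ not_regular; rewrite leqNgt; apply/negP.
case/card_gt2P => a [b [c [[Ha Hb Hc] [ab bc ca]]]].
rewrite !inE in Ha Hb Hc.
have [e e_new] : exists e, e \notin [:: a; b; c].
  by apply: exists_notin3; rewrite card_ord ltnS.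
have abce : uniq [:: a; b; c; e].
  move: e_new; rewrite !inE !negb_or => /and3P[ea eb ec].
  by rewrite /= !inE !negb_or ab bc (eq_sym a c) ca !(eq_sym _ e) ea eb ec.
apply: not_regular.
exact: (equilateral_of_three_regular_facets abce
  (apex_facet_regular Ha) (apex_facet_regular Hb) (apex_facet_regular Hc)).
Qed.
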